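(* Let $\mathbb{K}$ be any field and $n\geq 3$. Let $S$ be a linear subspace of $\mathrm{A}_n(\mathbb{K})$ in which every matrix has rank at most $2$. For $M\in S$ let $P(M)\in\mathrm{A}_{n-1}(\mathbb{K})$ be the upper-left $(n-1)\times(n-1)$ submatrix of $M$. Assume that $P(S)\subset\mathrm{WA}_{n-1,1,1}(\mathbb{K})$ and $\dim P(S)>1$. Then $S$ is congruent to a subspace of $\mathrm{WA}_{n,1,1}(\mathbb{K})$.
   Context: $\mathrm{A}_p(\mathbb{K})$ denotes the $p\times p$ alternating matrices (skew-symmetric, zero diagonal). $\mathrm{WA}_{p,1,1}(\mathbb{K})$ is the space of $M=(m_{i,j})\in\mathrm{A}_p(\mathbb{K})$ with $m_{i,j}=0$ whenever $i>1$ and $j>1$. Subsets $\mathcal{V},\mathcal{W}$ of $\mathrm{M}_n(\mathbb{K})$ are congruent if $\mathcal{V}=Q\mathcal{W}Q^T$ for some $Q\in\mathrm{GL}_n(\mathbb{K})$. *)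

From HB Require Import structures.
From mathcomp Require Import all_boot all_order all_algebra.
Set Implicit Arguments. Unset Strict Implicit. Unset Printing Implicit Defensive.
Import GRing.Theory.
Local Open Scope ring_scope.

Definition alternating (K : fieldType) (p : nat) (M : 'M[K]_p) : Prop :=
  M^T = - M /\ forall i, M i i = 0.

(* WA_{p,1,1}(K): alternating M with m_{i,j} = 0 whenever i > 1 and j > 1
   (1-indexed), i.e. 0-indexed i >= 1 and j >= 1. *)
Definition inWA11 (K : fieldType) (p : nat) (M : 'M[K]_p) : Prop :=
  alternating M /\ forall i j : 'I_p, (0 < i)%N -> (0 < j)%N -> M i j = 0.

Definition upleft (K : fieldType) (n : nat) (M : 'M[K]_n) : 'M[K]_n.-1 :=
  \matrix_(i < n.-1, j < n.-1) M (widen_ord (leq_pred n) i) (widen_ord (leq_pred n) j).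

Section UpleftLinear.
Variables (K : fieldType) (n : nat).
Lemma upleft_linear : linear (@upleft K n).
Proof. by move=> a A B; apply/matrixP => i j; rewrite !mxE. Qed.
HB.instance Definition _ :=
  GRing.isLinear.Build K 'M[K]_n 'M[K]_n.-1 _ (@upleft K n) upleft_linear.
End UpleftLinear.

From HB Require Import structures.
From mathcomp Require Import all_boot all_order all_algebra ring.
From Stdlib Require Import Classical.

(* For M in S let a_M and b_M be the first row and the last column of M
   restricted to the inner indices 1 .. n-2; the condition on P(M) leaves
   only these two vectors and the corner entries.  A 3 x 3 minor shows that
   rank M <= 2 makes a_M and b_M collinear, and polarising over M + N gives
   a_M /\ b_N + a_N /\ b_M = 0.  As P(M) is determined by a_M, dim P(S) > 1
   yields two independent vectors a_M1, a_M2, and these relations then force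
   b_M = c a_M for one scalar c and every M in S.  Adding c times the first
   row to the last row, and likewise for columns, clears every b_M. *)

Set Implicit Arguments.
Unset Strict Implicit.
Unset Printing Implicit Defensive.

Import GRing.Theory.
Local Open Scope ring_scope.

Lemma det_mx33 (R : comNzRingType) (A : 'M[R]_3) :
  \det A = A 0 0 * (A 1 1 * A 2 2 - A 1 2 * A 2 1)
         - A 0 1 * (A 1 0 * A 2 2 - A 1 2 * A 2 0)
         + A 0 2 * (A 1 0 * A 2 1 - A 1 1 * A 2 0).
Proof.
have -> : A = \matrix_(i, j) A (inord i) (inord j).
  by apply/matrixP => i j; rewrite mxE !inord_val.
rewrite (expand_det_row _ 0) !big_ord_recl big_ord0 /cofactor.
rewrite !(expand_det_row _ 0) !big_ord_recl !big_ord0 /cofactor !det_mx11 !mxE /=.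
ring.
Qed.

Lemma mxrank_mxsub (F : fieldType) m n m' n' (f : 'I_m' -> 'I_m) (g : 'I_n' -> 'I_n)
    (A : 'M[F]_(m, n)) :
  (\rank (mxsub f g A) <= \rank A)%N.
Proof.
rewrite mxsubcr -[rowsub f A]mulmx1 -mulmx_colsub.
exact: leq_trans (mxrankM_maxl _ _) (mxrankS (rowsub_sub _ _)).
Qed.

Lemma det_mxsub_eq0 (F : fieldType) m n k (f : 'I_k -> 'I_m) (g : 'I_k -> 'I_n)
    (A : 'M[F]_(m, n)) :
  (\rank A < k)%N -> \det (mxsub f g A) = 0.
Proof.
move=> rkA; apply/eqP; apply: contraTT rkA => det_nz.
have /mxrank_unit rk_sub : mxsub f g A \in unitmx by rewrite unitmxE unitfE.
by rewrite -leqNgt -{1}rk_sub mxrank_mxsub.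
Qed.

Section Alternating.
Variables (K : fieldType) (n : nat).
Implicit Types (M Q : 'M[K]_n) (i j z l : 'I_n).

Lemma alternating_skew M i j : alternating M -> M j i = - M i j.
Proof. by case=> /matrixP /(_ i j); rewrite !mxE. Qed.

Lemma alternating_congr Q M : alternating M -> alternating (Q *m M *m Q^T).
Proof.
move=> altM; split.
  by rewrite !trmx_mul trmxK altM.1 mulNmx mulmxN mulmxA.
pose U := \matrix_(r, s) if (r < s)%N then M r s else 0.
have -> : M = U - U^T.
  apply/matrixP => r s; rewrite !mxE.
  case: ltngtP => [// | _ | /val_inj ->]; last by rewrite altM.2 subrr.
  - by rewrite subr0.
  - by rewrite sub0r (alternating_skew s r altM).
have -> : Q *m (U - U^T) *m Q^T = Q *m U *m Q^T - (Q *m U *m Q^T)^T.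
  by rewrite !trmx_mul trmxK mulmxBr mulmxBl mulmxA.
by move=> i; rewrite !mxE subrr.
Qed.

Lemma alternating_rank2_minor M z i j l :
  alternating M -> (\rank M <= 2)%N -> M i j = 0 ->
  M z i * (M z i * M j l - M z j * M i l) = 0.
Proof.
move=> altM rkM Mij.
(* Rows j, z, i and columns l, i, z: the middle column is (0, M z i, 0). *)
pose f (r : 'I_3) := nth z [:: j; z; i] r.
pose g (r : 'I_3) := nth z [:: l; i; z] r.
have := det_mxsub_eq0 f g rkM.
rewrite det_mx33 !mxE /= (alternating_skew i j altM) Mij.
rewrite (alternating_skew z j altM) (alternating_skew z i altM) !altM.2 => det0.
by rewrite -oppr0 -det0; ring.
Qed.

Lemma alternating_rank2_cross M z i j l :
  alternating M -> (\rank M <= 2)%N -> M i j = 0 ->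
  M z i * M j l = M z j * M i l.
Proof.
move=> altM rkM Mij.
have Mji : M j i = 0 by rewrite (alternating_skew i j altM) Mij oppr0.
have cancel_factor (x a b : K) : x * (a - b) = 0 -> x != 0 -> a = b.
  by move=> /eqP; rewrite mulf_eq0 subr_eq0 => /orP[/eqP-> /eqP | /eqP].
have [Mzi0 | Mzi_nz] := eqVneq (M z i) 0; last first.
  exact: cancel_factor (alternating_rank2_minor z l altM rkM Mij) Mzi_nz.
have [Mzj0 | Mzj_nz] := eqVneq (M z j) 0; first by rewrite Mzi0 Mzj0 !mul0r.
exact/esym/(cancel_factor _ _ _ (alternating_rank2_minor z l altM rkM Mji)).
Qed.

End Alternating.

Section Collinear.
Variables (R : idomainType) (I : Type) (P : pred I).

Definition collinear_on (x y : I -> R) :=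
  forall i j, P i -> P j -> x i * y j = x j * y i.

Lemma collinear_on_eq0 (x y h : I -> R) i0 j0 :
  P i0 -> P j0 -> x i0 * y j0 != x j0 * y i0 ->
  collinear_on x h -> collinear_on y h -> forall k, P k -> h k = 0.
Proof.
move=> Pi0 Pj0; rewrite -subr_eq0 => /mulfI indep hx hy.
have h_i0 : h i0 = 0.
  apply: indep; rewrite mulr0.
  transitivity (x i0 * (y j0 * h i0) - y i0 * (x j0 * h i0)); first ring.
  by rewrite hy // hx //; ring.
move=> k Pk; apply: indep; rewrite mulr0.
transitivity (y j0 * (x i0 * h k) - x j0 * (y i0 * h k)); first ring.
by rewrite hx // hy // h_i0; ring.
Qed.

End Collinear.

Section Transvection.
Variables (R : comNzRingType) (n : nat).
Implicit Types (A : 'M[R]_n) (a b r s : 'I_n).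

Definition transvection a b (c : R) : 'M[R]_n := 1%:M + c *: delta_mx a b.

Lemma transvection_mulE a b c A r s :
  (transvection a b c *m A) r s = A r s + c * (r == a)%:R * A b s.
Proof.
rewrite mulmxDl mul1mx -scalemxAl !mxE (bigD1 b) //= big1 ?addr0.
  by rewrite mxE eqxx andbT mulrA.
by move=> k kb; rewrite mxE (negbTE kb) andbF mul0r.
Qed.

Lemma transvection_congrE a b c A r s :
  (transvection a b c *m A *m (transvection a b c)^T) r s =
  A r s + c * (r == a)%:R * A b s
        + c * (s == a)%:R * (A r b + c * (r == a)%:R * A b b).
Proof.
have -> : (transvection a b c *m A *m (transvection a b c)^T) r s =
          (transvection a b c *m (transvection a b c *m A)^T) s r.
  by rewrite -[in RHS](trmxK (transvection a b c)) -trmx_mul trmxK [in RHS]mxE.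
by rewrite transvection_mulE ![(_^T) _ _]mxE !transvection_mulE.
Qed.

End Transvection.

Lemma transvection_unit (R : comUnitRingType) n (a b : 'I_n) (c : R) :
  a != b -> transvection a b c \in unitmx.
Proof.
move=> ab; suff /mulmx1_unit[] : transvection a b c *m transvection a b (- c) = 1%:M by [].
rewrite /transvection mulmxDl mul1mx mulmxDr mulmx1 -!scalemxAl -scalemxAr.
by rewrite mul_delta_mx_0 1?eq_sym // !scaler0 addr0 scaleNr addrNK.
Qed.

Section WA11.
Variables (K : fieldType) (p : nat).
Implicit Types (A B : 'M[K]_p.+1) (r s : 'I_p.+1).

Lemma inWA11_entry A r s :
  inWA11 A -> A r s = (r == ord0)%:R * A ord0 s - (s == ord0)%:R * A ord0 r.
Proof.
case=> altA WA.
have [-> | r_nz] := eqVneq r ord0; have [-> | s_nz] := eqVneq s ord0.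
- by rewrite altA.2 subrr.
- by rewrite mul1r mul0r subr0.
- by rewrite mul0r mul1r sub0r (alternating_skew ord0 r altA).
- by rewrite !mul0r subrr WA // lt0n.
Qed.

Lemma dim_WA11_le1 (T : {vspace 'M[K]_p.+1}) :
  (forall A, A \in T -> inWA11 A) ->
  (forall A B, A \in T -> B \in T -> collinear_on predT (A ord0) (B ord0)) ->
  (\dim T <= 1)%N.
Proof.
move=> WA_T col_T.
have [-> | /negbTE] := eqVneq T 0%VS; first by rewrite dimv0.
rewrite -vpick0; set A0 := vpick T => A0_nz.
have A0_T : A0 \in T := memv_pick T.
have [k A0k] : exists k, A0 ord0 k != 0.
  apply/existsP; apply: contraFT A0_nz; rewrite negb_exists => /forallP A0_0.
  apply/eqP/matrixP => r s; rewrite mxE (inWA11_entry r s (WA_T _ A0_T)).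
  by rewrite !(eqP (negPn (A0_0 _))) !mulr0 subrr.
apply: leq_trans (dimvS (_ : T <= <[A0]>)%VS) _; last by rewrite dim_vline leq_b1.
apply/subvP => B B_T; apply/vlineP; exists (B ord0 k / A0 ord0 k).
have B_row s : B ord0 s = B ord0 k / A0 ord0 k * A0 ord0 s.
  by rewrite -mulrA mulrC -mulrA (col_T _ _ A0_T B_T) // mulKf.
apply/matrixP => r s; rewrite mxE (inWA11_entry r s (WA_T _ B_T)).
by rewrite (inWA11_entry r s (WA_T _ A0_T)) (B_row r) (B_row s); ring.
Qed.

End WA11.

Section Reduction.
Variables (K : fieldType) (m : nat) (S : {vspace 'M[K]_m.+3}).
Hypothesis S_alt : forall M, M \in S -> alternating M.
Hypothesis S_rank : forall M, M \in S -> (\rank M <= 2)%N.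
Hypothesis S_WA : forall M, M \in S -> inWA11 (upleft M).

Local Notation z := (ord0 : 'I_m.+3).
Local Notation l := (ord_max : 'I_m.+3).
Local Notation w := (widen_ord (leq_pred m.+3)).

Definition inner (i : 'I_m.+3) := (0 < i < m.+2)%N.

Lemma inner_widen (s : 'I_m.+2) : inner (w s) = (0 < s)%N.
Proof. by rewrite /inner /= ltn_ord andbT. Qed.

Lemma inner_eq0 M i j : M \in S -> inner i -> inner j -> M i j = 0.
Proof.
move=> M_S /andP[i_gt0 i_lt] /andP[j_gt0 j_lt].
have := (S_WA M_S).2 (Ordinal i_lt) (Ordinal j_lt) i_gt0 j_gt0.
rewrite mxE; have -> : w (Ordinal i_lt) = i by apply: val_inj.
by have -> : w (Ordinal j_lt) = j by apply: val_inj.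
Qed.

Lemma first_last_collinear M : M \in S -> collinear_on inner (M z) (fun k => M k l).
Proof.
move=> M_S i j inner_i inner_j /=.
by apply: alternating_rank2_cross; [exact: S_alt | exact: S_rank | exact: inner_eq0].
Qed.

Lemma residual_collinear M N c :
  M \in S -> N \in S -> (forall k, inner k -> N k l = c * N z k) ->
  collinear_on inner (N z) (fun k => M k l - c * M z k).
Proof.
move=> M_S N_S N_last i j inner_i inner_j /=.
have MN := first_last_collinear (memvD M_S N_S) inner_i inner_j.
rewrite /= !mxE !N_last // in MN.
transitivity ((M z i + N z i) * (M j l + c * N z j) - M z i * M j l
              - c * (M z i * N z j + N z i * N z j + N z i * M z j)); first ring.
by rewrite MN (first_last_collinear M_S inner_i inner_j); ring.
Qed.

Lemma exists_noncollinear_pair :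
  (1 < \dim (linfun (@upleft K m.+3) @: S))%N ->
  exists M1 M2 i j, [/\ M1 \in S, M2 \in S, inner i, inner j &
                        M1 z i * M2 z j != M1 z j * M2 z i].
Proof.
move=> dim_gt1; apply: NNPP => no_pair.
suff : (\dim (linfun (@upleft K m.+3) @: S) <= 1)%N by rewrite leqNgt dim_gt1.
apply: dim_WA11_le1 => [_ /memv_imgP[M M_S ->] | _ _ /memv_imgP[M M_S ->] /memv_imgP[N N_S ->]].
  by rewrite lfunE; exact: S_WA.
move=> s t _ _; rewrite !lfunE /= !mxE.
have w0 : w ord0 = z by apply: val_inj.
have M0 := (S_alt M_S).2; have N0 := (S_alt N_S).2.
have [-> | s_nz] := eqVneq s ord0; first by rewrite w0 !M0 !N0 !mul0r mulr0.
have [-> | t_nz] := eqVneq t ord0; first by rewrite w0 !M0 !N0 !mul0r mulr0.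
rewrite w0; apply/eqP; apply: contraT => ne; case: no_pair.
by exists M, N, (w s), (w t); rewrite !inner_widen !lt0n.
Qed.

Lemma exists_last_col_multiple :
  (1 < \dim (linfun (@upleft K m.+3) @: S))%N ->
  exists c, forall M, M \in S -> forall k, inner k -> M k l = c * M z k.
Proof.
move=> /exists_noncollinear_pair[M1 [M2 [i0 [j0 [M1_S M2_S inner_i0 inner_j0 indep]]]]].
have [p inner_p M1p] : exists2 p, inner p & M1 z p != 0.
  have [M1i0 | ] := eqVneq (M1 z i0) 0; last by exists i0.
  have [M1j0 | ] := eqVneq (M1 z j0) 0; last by exists j0.
  by move: indep; rewrite M1i0 M1j0 !mul0r eqxx.
pose c := M1 p l / M1 z p.
have M1_last k : inner k -> M1 k l = c * M1 z k.
  move=> inner_k; apply: (mulfI M1p).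
  rewrite (first_last_collinear M1_S inner_p inner_k) /c.
  by field.
have last_of_residual M : M \in S ->
    collinear_on inner (M2 z) (fun k => M k l - c * M z k) ->
    forall k, inner k -> M k l = c * M z k.
  move=> M_S col2 k inner_k; apply/eqP; rewrite -subr_eq0; apply/eqP.
  exact: (collinear_on_eq0 inner_i0 inner_j0 indep (residual_collinear M_S M1_S M1_last) col2).
have M2_last : forall k, inner k -> M2 k l = c * M2 z k.
  apply: (last_of_residual M2 M2_S) => i j inner_i inner_j /=.
  by rewrite !mulrBr (first_last_collinear M2_S inner_i inner_j); ring.
by exists c => M M_S; apply: last_of_residual M_S (residual_collinear M_S M2_S M2_last).
Qed.

Lemma transvection_congr_inWA11 c :
  (forall M, M \in S -> forall k, inner k -> M k l = c * M z k) ->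
  forall M, M \in S -> inWA11 (transvection l z c *m M *m (transvection l z c)^T).
Proof.
move=> S_last M M_S; have altM := S_alt M_S.
split; first exact: alternating_congr.
have inner_of (r : 'I_m.+3) : (0 < r)%N -> r != l -> inner r.
  by move=> r_gt0 r_l; rewrite /inner r_gt0 ltn_neqAle -ltnS ltn_ord andbT.
move=> r s r_gt0 s_gt0; rewrite transvection_congrE.
have [-> | r_l] := eqVneq r l; have [-> | s_l] := eqVneq s l;
  rewrite ?eqxx ?(negbTE r_l) ?(negbTE s_l) /= ?mulr1n ?mulr0n.
- by rewrite !altM.2 (alternating_skew z l altM); ring.
- by rewrite (alternating_skew s l altM) S_last ?inner_of //; ring.
- by rewrite (alternating_skew z r altM) S_last ?inner_of //; ring.
- by rewrite inner_eq0 ?inner_of //; ring.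
Qed.

End Reduction.

Theorem lemma4p6 (K : fieldType) (n : nat) (S : {vspace 'M[K]_n}) :
  (3 <= n)%N ->
  (forall M, M \in S -> alternating M) ->
  (forall M, M \in S -> (\rank M <= 2)%N) ->
  (forall M, M \in S -> inWA11 (upleft M)) ->
  (1 < \dim (linfun (@upleft K n) @: S))%N ->
  exists Q : 'M[K]_n, Q \in unitmx /\
    forall M, M \in S -> inWA11 (Q *m M *m Q^T).
Proof.
case: n S => [|[|[|m]]] S // _ S_alt S_rank S_WA dim_gt1.
have [c S_last] := exists_last_col_multiple S_alt S_rank S_WA dim_gt1.
exists (transvection ord_max ord0 c); split; first exact: transvection_unit.
exact: transvection_congr_inWA11.
Qed.
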